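(* Let $x\in J$ and let $\mathcal I=\{I_i\}_{i\in F}$ and $\mathcal L=\{L_j\}_{j\in G}$ be $x$-norming partitions. Then there exists an $x$-norming partition $\mathcal N=\{N_p\}_{p\in H}$ such that (1) $\mathcal N\subset\mathcal I\cup\mathcal L$; (2) for every $i\in F$ there is a subinterval $H_i$ of $H$ with $I_i\cap\mathrm{supp}(x)=\bigcup_{p\in H_i}(N_p\cap\mathrm{supp}(x))$, and for every $j\in G$ there is a subinterval $H'_j$ of $H$ with $L_j\cap\mathrm{supp}(x)=\bigcup_{p\in H'_j}(N_p\cap\mathrm{supp}(x))$.
   Context: For a real sequence $x=(x(n))_{n\in\mathbb N}$ let $\|x\|_J=\sup\bigl(\sum_{i=1}^n|\sum_{k\in I_i}x(k)|^2\bigr)^{1/2}$ over all $n$ and all families of pairwise disjoint intervals $I_1,\dots,I_n$ of $\mathbb N$ (intervals: nonempty sets of consecutive positive integers, possibly infinite). $J=\{x:\|x\|_J<\infty\}$; for $x\in J$ and any interval $I$ the series $\sum_{k\in I}x(k)$ converges. $\mathrm{supp}(x)=\{n:x(n)\ne0\}$. A family of intervals $\mathcal I=\{I_i\}_{i\in F}$: $F=\{1,\dots,k\}$ or $F=\mathbb N$, each $I_i$ an interval, $\max I_i<\min I_{i+1}$ whenever $i+1\in F$; $\|x\|_{\mathcal I}=(\sum_{i\in F}|\sum_{k\in I_i}x(k)|^2)^{1/2}$; it is $x$-norming if $\|x\|_{\mathcal I}=\|x\|_J$. For nonempty $L\subset\mathbb N$, $\sup L=\max L$ if finite and $\infty$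 otherwise. An $x$-norming partition is an $x$-norming family with $\{\min I_i,\max I_i\}\subset\mathrm{supp}(x)$ for all $i<\sup F$, and, if $F$ is finite, $\min I_i\in\mathrm{supp}(x)$ and $\sup I_i=\sup\mathrm{supp}(x)$ for $i=\sup F$. *)

From Stdlib Require Import Reals Lia List.
From Coquelicot Require Import Coquelicot.
Open Scope R_scope.

(* Sequences are indexed by nat (index 0 plays the role of the paper's 1). *)
Definition supp (x : nat -> R) (n : nat) : Prop := x n <> 0.

(* Intervals of nat: nonempty sets of consecutive naturals.
   IFin a d = {a, ..., a+d};  IInf a = {a, a+1, ...}. *)
Inductive interval : Type :=
| IFin : nat -> nat -> interval
| IInf : nat -> interval.

Definition in_int (I : interval) (n : nat) : Prop :=
  match I with
  | IFin a d => (a <= n <= a + d)%nat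
  | IInf a => (a <= n)%nat
  end.

Definition min_int (I : interval) : nat :=
  match I with IFin a _ => a | IInf a => a end.

(* max I if finite, None (= infinity) otherwise: this is sup I *)
Definition max_int (I : interval) : option nat :=
  match I with IFin a d => Some (a + d)%nat | IInf _ => None end.

Definition isum (x : nat -> R) (I : interval) : R :=
  match I with
  | IFin a d => sum_f_R0 (fun k => x (a + k)%nat) d
  | IInf a => Series (fun k => x (a + k)%nat)
  end.

Definition pairwise_disjoint (l : list interval) : Prop :=
  forall i j : nat, (i < length l)%nat -> (j < length l)%nat -> i <> j ->
    forall n, ~ (in_int (nth i l (IInf 0)) n /\ in_int (nth j l (IInf 0)) n).

Definition sumsq_list (x : nat -> R) (l : list interval) : R :=
  fold_right (fun I s => (isum x I) ^ 2 + s) 0 l.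

Definition normJ (x : nat -> R) : Rbar :=
  Lub_Rbar (fun r => exists l : list interval,
                l <> nil /\ pairwise_disjoint l /\ r = sqrt (sumsq_list x l)).

Definition in_J (x : nat -> R) : Prop := is_finite (normJ x).

(* A ifamily of intervals {I_i}_{i in F}: F = {0..k-1} (fsize = Some k)
   or F = nat (fsize = None). *)
Record ifamily : Type := mkIFamily { fsize : option nat; fint : nat -> interval }.

Definition inF (f : ifamily) (i : nat) : Prop :=
  match fsize f with Some k => (i < k)%nat | None => True end.

Definition is_family (f : ifamily) : Prop :=
  forall i, inF f (S i) ->
    exists b, max_int (fint f i) = Some b /\ (b < min_int (fint f (S i)))%nat.

Fixpoint psumsq (x : nat -> R) (g : nat -> interval) (n : nat) : R :=
  match n with
  | O => 0
  | S m => psumsq x g m + (isum x (g m)) ^ 2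
  end.

Definition norm_fam (x : nat -> R) (f : ifamily) : Rbar :=
  match fsize f with
  | Some k => Finite (sqrt (psumsq x (fint f) k))
  | None => Lim_seq (fun n => sqrt (psumsq x (fint f) n))
  end.

Definition x_norming (x : nat -> R) (f : ifamily) : Prop :=
  is_family f /\ norm_fam x f = normJ x.

(* sup I = sup supp(x)  (sup of an infinite set is infinity) *)
Definition sup_eq_supp (x : nat -> R) (I : interval) : Prop :=
  match max_int I with
  | Some m => supp x m /\ (forall n, (m < n)%nat -> ~ supp x n)
  | None => forall N, exists n, (N <= n)%nat /\ supp x n
  end.

Definition x_norming_partition (x : nat -> R) (f : ifamily) : Prop :=
  x_norming x f /\
  (forall i, inF f i -> inF f (S i) ->
     supp x (min_int (fint f i)) /\
     exists b, max_int (fint f i) = Some b /\ supp x b) /\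
  (forall i, fsize f = Some (S i) ->
     supp x (min_int (fint f i)) /\ sup_eq_supp x (fint f i)).

Definition same_interval (I K : interval) : Prop :=
  forall n, in_int I n <-> in_int K n.

Definition index_subinterval (f : ifamily) (K : interval) : Prop :=
  forall p, in_int K p -> inF f p.

Definition covers_supp (x : nat -> R) (I : interval) (N : ifamily) (K : interval) : Prop :=
  forall n, (in_int I n /\ supp x n) <->
            (exists p, in_int K p /\ in_int (fint N p) n /\ supp x n).

From Stdlib Require Import Reals Lra Lia List Classical ClassicalEpsilon.
From Coquelicot Require Import Coquelicot.
Open Scope R_scope.

(* List the left endpoints of the intervals of I and L increasingly; the p-th
   interval of N is an interval of I or of L that starts at the p-th endpoint
   and whose successor (if any) starts at the (p+1)-th.  Such an interval exists
   because intervals of two norming partitions never cross: if I_i = [a, b] and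
   L_j starts at c in (a, b] and reaches a support point beyond b, then the sums
   A, B, C over [a, c), [c, b] and (b, sup L_j] are nonzero, while norming
   forces AB > 0, BC > 0 (subdividing I_i, L_j does not increase the square sum)
   and AC <= 0 (exchanging I_i, L_j for [a, sup L_j], [c, b] does not increase
   it either).  N is norming because, up to any point, the square sums of N and
   of the intervals it leaves out add up to those of I and L, each close to
   ||x||^2, while the leftover intervals are disjoint and so contribute at most
   ||x||^2. *)

(** * Intervals and families of intervals *)

Lemma in_int_min (I : interval) : in_int I (min_int I).
Proof. destruct I; simpl; lia. Qed.

Lemma min_int_le (I : interval) n : in_int I n -> (min_int I <= n)%nat.
Proof. destruct I; simpl; lia. Qed.

Lemma le_max_int (I : interval) b n : max_int I = Some b -> in_int I n -> (n <= b)%nat.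
Proof. destruct I; simpl; intros H; inversion H; lia. Qed.

Lemma in_int_max (I : interval) b : max_int I = Some b -> in_int I b.
Proof. destruct I; simpl; intros H; inversion H; lia. Qed.

Lemma in_int_between (I : interval) m n k :
  in_int I m -> in_int I n -> (m <= k <= n)%nat -> in_int I k.
Proof. destruct I; simpl; lia. Qed.

Lemma nat_least_witness (P : nat -> Prop) :
  (exists n, P n) -> exists n, P n /\ forall m, (m < n)%nat -> ~ P m.
Proof.
  intros H. destruct (Wf_nat.dec_inh_nat_subset_has_unique_least_element P
    (fun n => classic (P n)) H) as [n [[Hn Hl] _]].
  exists n; split; auto. intros m Hm HP. specialize (Hl m HP). lia.
Qed.

(* [rest K c] runs from [c] to [sup K]; for [c < min_int K] it extends [K]
   to the left. *)
Definition cut (K : interval) (c : nat) : interval := IFin (min_int K) (c - 1 - min_int K).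

Definition rest (K : interval) (c : nat) : interval :=
  match K with IFin a d => IFin c (a + d - c) | IInf _ => IInf c end.

Lemma in_cut K c n : (min_int K < c)%nat -> in_int (cut K c) n <-> (min_int K <= n < c)%nat.
Proof. simpl; lia. Qed.

Lemma min_rest K c : min_int (rest K c) = c.
Proof. destruct K; reflexivity. Qed.

Lemma in_rest K c n : in_int K c -> in_int (rest K c) n <-> in_int K n /\ (c <= n)%nat.
Proof. destruct K; simpl; lia. Qed.

Lemma in_rest_of_le K c n : (c <= n)%nat -> in_int K n -> in_int (rest K c) n.
Proof. destruct K; simpl; lia. Qed.

Lemma rest_rest K c c' : (c <= c')%nat -> in_int K c' -> rest (rest K c) c' = rest K c'.
Proof. destruct K; simpl; intros; auto. f_equal. lia. Qed.

Lemma rest_min_int K : rest K (min_int K) = K.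
Proof. destruct K; simpl; auto. f_equal. lia. Qed.

Lemma rest_below_point K c n : (c <= min_int K)%nat -> in_int (rest K c) n ->
  exists n', in_int K n' /\ (n <= n')%nat.
Proof.
  destruct K as [a d|a]; simpl; intros Hc H.
  - exists (a + d)%nat. lia.
  - exists (Nat.max n a). lia.
Qed.

Definition int_lt (I K : interval) := forall n m, in_int I n -> in_int K m -> (n < m)%nat.

Definition int_sorted (l : list interval) := ForallOrdPairs int_lt l.

Lemma int_lt_trans A B C : int_lt A B -> int_lt B C -> int_lt A C.
Proof.
  intros H1 H2 n m Hn Hm.
  pose proof (H1 n _ Hn (in_int_min B)). pose proof (H2 _ m (in_int_min B) Hm). lia.
Qed.

Lemma int_sorted_nth l i j d :
  int_sorted l -> (i < j)%nat -> (j < length l)%nat -> int_lt (nth i l d) (nth j l d).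
Proof.
  intros H; revert i j; induction H; intros i j Hij Hj; simpl in *; [lia|].
  destruct i, j; try lia.
  - rewrite Forall_forall in H. apply H, nth_In. lia.
  - apply IHForallOrdPairs; lia.
Qed.

Lemma int_sorted_disjoint l : int_sorted l -> pairwise_disjoint l.
Proof.
  intros H i j Hi Hj Hij n [H1 H2].
  destruct (Nat.lt_total i j) as [Ha|[Ha|Ha]]; try lia.
  - pose proof (int_sorted_nth _ _ _ (IInf 0) H Ha Hj n n H1 H2); lia.
  - pose proof (int_sorted_nth _ _ _ (IInf 0) H Ha Hi n n H2 H1); lia.
Qed.

Lemma int_sorted_cons a l :
  int_sorted l -> (forall b, In b l -> int_lt a b) -> int_sorted (a :: l).
Proof. intros; constructor; auto. apply Forall_forall; auto. Qed.

Lemma int_sorted_app l1 l2 : int_sorted l1 -> int_sorted l2 ->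
  (forall a b, In a l1 -> In b l2 -> int_lt a b) -> int_sorted (l1 ++ l2).
Proof.
  intros H1 H2 H3; induction H1; simpl; auto.
  apply int_sorted_cons.
  - apply IHForallOrdPairs; intros; apply H3; simpl; auto.
  - intros b Hb. apply in_app_or in Hb as [Hb|Hb].
    + rewrite Forall_forall in H. auto.
    + apply H3; simpl; auto.
Qed.

Lemma int_sorted_single a : int_sorted (a :: nil).
Proof. repeat constructor. Qed.

Lemma int_sorted_pair a b : int_lt a b -> int_sorted (a :: b :: nil).
Proof. intros; repeat constructor; auto. Qed.

Lemma int_sorted_triple a b c :
  int_lt a b -> int_lt b c -> int_sorted (a :: b :: c :: nil).
Proof.
  intros Hab Hbc. repeat constructor; auto. eapply int_lt_trans; eauto.
Qed.

Definition inF_below (f : ifamily) n := forall m, (m < n)%nat -> inF f m.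

Section Families.
Variable f : ifamily.
Hypothesis Hf : is_family f.

Lemma inF_le m n : inF f n -> (m <= n)%nat -> inF f m.
Proof. unfold inF; destruct (fsize f); auto; lia. Qed.

Lemma family_succ_lt i : inF f (S i) -> int_lt (fint f i) (fint f (S i)).
Proof.
  intros Hi n m Hn Hm. destruct (Hf i Hi) as [b [Hb Hlt]].
  pose proof (le_max_int _ _ _ Hb Hn). pose proof (min_int_le _ _ Hm). lia.
Qed.

Lemma family_lt i j : inF f j -> (i < j)%nat -> int_lt (fint f i) (fint f j).
Proof.
  intros Hj Hij. induction Hij as [|j Hij IH]; [apply family_succ_lt; auto|].
  apply int_lt_trans with (fint f j); [|apply family_succ_lt; auto].
  apply IH, inF_le with (S j); auto.
Qed.

Lemma family_min_lt i j :
  inF f j -> (i < j)%nat -> (min_int (fint f i) < min_int (fint f j))%nat.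
Proof. intros Hj Hij. apply (family_lt i j Hj Hij); apply in_int_min. Qed.

Lemma family_min_lt_inv i j : inF f i -> inF f j ->
  (min_int (fint f i) < min_int (fint f j))%nat -> (i < j)%nat.
Proof.
  intros Hi Hj H. destruct (Nat.lt_total i j) as [H'|[H'|H']]; auto; [subst; lia|].
  pose proof (family_min_lt j i Hi H'). lia.
Qed.

Lemma family_index_le_min i : inF f i -> (i <= min_int (fint f i))%nat.
Proof.
  induction i as [|i IH]; intros Hi; [lia|].
  pose proof (family_min_lt i (S i) Hi (Nat.lt_succ_diag_r i)).
  pose proof (IH (inF_le i (S i) Hi (Nat.le_succ_diag_r i))). lia.
Qed.

Lemma family_sorted a k : inF_below f (a + k) -> int_sorted (map (fint f) (seq a k)).
Proof.
  revert a; induction k as [|k IH]; intros a Hr; simpl; [constructor|].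
  apply int_sorted_cons.
  - apply IH. intros m Hm; apply Hr; lia.
  - intros b Hb. apply in_map_iff in Hb as [j [<- Hj]]. apply in_seq in Hj.
    apply family_lt; [apply Hr|]; lia.
Qed.

End Families.

Definition after_prefix (f : ifamily) i n :=
  forall k m, (k < i)%nat -> in_int (fint f k) m -> (m < n)%nat.

Definition before_suffix (f : ifamily) i n :=
  forall k m, (i < k)%nat -> inF f k -> in_int (fint f k) m -> (n < m)%nat.

Definition in_slot (f : ifamily) i (g : ifamily) j (m : list interval) :=
  forall K p, In K m -> in_int K p -> after_prefix f i p /\ before_suffix g j p.

Section Slots.
Variable f : ifamily.
Hypothesis Hf : is_family f.

Lemma after_prefix_of_min_le i n :
  inF f i -> (min_int (fint f i) <= n)%nat -> after_prefix f i n.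
Proof.
  intros Hi H k m Hk Hm. pose proof (family_lt f Hf k i Hi Hk m _ Hm (in_int_min _)). lia.
Qed.

Lemma after_prefix_succ i b n :
  inF f (S i) -> max_int (fint f i) = Some b -> (b < n)%nat -> after_prefix f (S i) n.
Proof.
  intros Hi Hb Hn k m Hk Hm. pose proof (in_int_max _ _ Hb).
  destruct (Nat.eq_dec k i) as [->|Hki]; [pose proof (le_max_int _ _ _ Hb Hm); lia|].
  pose proof (family_lt f Hf k i (inF_le f i (S i) Hi ltac:(lia)) ltac:(lia) m b Hm H). lia.
Qed.

Lemma before_suffix_of_le i n n' : in_int (fint f i) n' -> (n <= n')%nat -> before_suffix f i n.
Proof.
  intros Hn' H k m Hk HF Hm. pose proof (family_lt f Hf i k HF Hk n' m Hn' Hm). lia.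
Qed.

Lemma in_slot_within i m :
  inF f i -> (forall K n, In K m -> in_int K n -> in_int (fint f i) n) -> in_slot f i f i m.
Proof.
  intros Hi Hm K n HK Hn. pose proof (Hm K n HK Hn) as Hin. split.
  - apply after_prefix_of_min_le, min_int_le; auto.
  - apply before_suffix_of_le with n; auto.
Qed.

End Slots.

Lemma sumsq_app x l1 l2 : sumsq_list x (l1 ++ l2) = sumsq_list x l1 + sumsq_list x l2.
Proof. induction l1; simpl; [lra|]. rewrite IHl1. lra. Qed.

Lemma sumsq_list_nonneg x l : 0 <= sumsq_list x l.
Proof. induction l; simpl; nra. Qed.

Lemma psumsq_nonneg x g n : 0 <= psumsq x g n.
Proof. induction n; simpl; nra. Qed.

Lemma psumsq_mono x g m n : (m <= n)%nat -> psumsq x g m <= psumsq x g n.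
Proof. induction 1; simpl; nra. Qed.

Lemma sumsq_map_seq x g a k :
  sumsq_list x (map g (seq a k)) = psumsq x g (a + k) - psumsq x g a.
Proof.
  revert a; induction k as [|k IH]; intros a; simpl.
  - rewrite Nat.add_0_r. lra.
  - rewrite IH. replace (a + S k)%nat with (S a + k)%nat by lia. simpl. lra.
Qed.

Lemma isum_point x a : isum x (IFin a 0) = x a.
Proof. simpl. rewrite Nat.add_0_r. reflexivity. Qed.

Lemma sum_f_R0_split (u : nat -> R) d1 d2 :
  sum_f_R0 u (d1 + S d2) = sum_f_R0 u d1 + sum_f_R0 (fun k => u (S d1 + k)%nat) d2.
Proof.
  induction d2 as [|d2 IH].
  - rewrite Nat.add_1_r. simpl. rewrite Nat.add_0_r. reflexivity.
  - rewrite <- plus_n_Sm. simpl. rewrite IH. simpl.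
    replace (d1 + S d2)%nat with (S (d1 + d2)) by lia. lra.
Qed.

Lemma isum_IFin_split x a d c : (a < c <= a + d)%nat ->
  isum x (IFin a d) = isum x (IFin a (c - 1 - a)) + isum x (IFin c (a + d - c)).
Proof.
  intros H. simpl. replace d with ((c - 1 - a) + S (a + d - c))%nat at 1 by lia.
  rewrite sum_f_R0_split. f_equal. apply sum_eq; intros; f_equal; lia.
Qed.

Lemma isum_zero x a d : (forall k, (a <= k <= a + d)%nat -> x k = 0) -> isum x (IFin a d) = 0.
Proof.
  intros H. simpl. induction d as [|d IH]; simpl.
  - apply H; lia.
  - rewrite IH, H by (intros; try apply H; lia). lra.
Qed.

(** * The norm of J *)

Definition nJ (x : nat -> R) : R := real (normJ x).

Section JNorm.
Variable x : nat -> R.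
Hypothesis HJ : in_J x.

Lemma normJ_finite : normJ x = Finite (nJ x).
Proof. unfold nJ. rewrite HJ. reflexivity. Qed.

Lemma sqrt_sumsq_le_normJ l : l <> nil -> int_sorted l -> sqrt (sumsq_list x l) <= nJ x.
Proof.
  intros Hn Hs.
  destruct (Lub_Rbar_correct (fun r => exists l : list interval,
    l <> nil /\ pairwise_disjoint l /\ r = sqrt (sumsq_list x l))) as [Hub _].
  specialize (Hub (sqrt (sumsq_list x l))). fold (normJ x) in Hub.
  rewrite normJ_finite in Hub. apply Hub. exists l. auto using int_sorted_disjoint.
Qed.

Lemma nJ_nonneg : 0 <= nJ x.
Proof.
  eapply Rle_trans; [apply sqrt_pos|].
  apply (sqrt_sumsq_le_normJ (IFin 0 0 :: nil)); [discriminate|apply int_sorted_single].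
Qed.

Lemma sumsq_le_normJ l : int_sorted l -> sumsq_list x l <= nJ x ^ 2.
Proof.
  intros Hs. destruct l as [|a l]; [simpl; pose proof nJ_nonneg; nra|].
  pose proof (sqrt_sumsq_le_normJ (a :: l) ltac:(discriminate) Hs).
  pose proof (sumsq_list_nonneg x (a :: l)). pose proof (sqrt_pos (sumsq_list x (a :: l))).
  rewrite <- (sqrt_sqrt (sumsq_list x (a :: l))) by auto. nra.
Qed.

Lemma psumsq_le_normJ f n : is_family f -> inF_below f n -> psumsq x (fint f) n <= nJ x ^ 2.
Proof.
  intros Hf Hn. pose proof (sumsq_le_normJ _ (family_sorted f Hf 0 n Hn)) as H.
  rewrite sumsq_map_seq in H. simpl in H. lra.
Qed.

Lemma sumsq_blocks_unbounded eps :
  (forall N, exists b d, (N <= b)%nat /\ eps ^ 2 <= isum x (IFin b d) ^ 2) ->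
  forall k N, exists l, int_sorted l /\ (forall K n, In K l -> in_int K n -> (N <= n)%nat) /\
    INR k * eps ^ 2 <= sumsq_list x l.
Proof.
  intros Hb k. induction k as [|k IH]; intros N.
  - exists nil. split; [constructor|]. split; [intros K n []|]. simpl. lra.
  - destruct (Hb N) as [b [d [Hbn Hbe]]].
    destruct (IH (S (b + d))) as [l [Hs [Hp Hv]]].
    exists (IFin b d :: l). split; [|split].
    + apply int_sorted_cons; auto. intros K HK n m Hn Hm. simpl in Hn.
      pose proof (Hp K m HK Hm). lia.
    + intros K n [<-|HK] Hn; [simpl in Hn; lia|]. pose proof (Hp K n HK Hn). lia.
    + rewrite S_INR. cbn [sumsq_list fold_right]. fold (sumsq_list x l). lra.
Qed.

Lemma partial_sum_diff a m n : (m < n)%nat ->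
  sum_f_R0 (fun k => x (a + k)%nat) n - sum_f_R0 (fun k => x (a + k)%nat) m =
  isum x (IFin (a + S m) (n - S m)).
Proof.
  intros Hmn. replace n with (m + S (n - S m))%nat at 1 by lia.
  rewrite sum_f_R0_split. simpl.
  assert (sum_f_R0 (fun k => x (a + S (m + k))%nat) (n - S m) =
          sum_f_R0 (fun k => x (a + S m + k)%nat) (n - S m))
    by (apply sum_eq; intros; f_equal; lia).
  lra.
Qed.

(* Blocks of partial sums of size at least [eps] far out would give disjoint
   intervals with arbitrarily large square sum. *)
Lemma ex_series_tail a : ex_series (fun k => x (a + k)%nat).
Proof.
  set (u := fun k => x (a + k)%nat).
  assert (HC : Cauchy_crit (fun n => sum_f_R0 u n)).
  { intros eps Heps. apply NNPP; intro Hno.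
    assert (Hb : forall N, exists b d, (N <= b)%nat /\ eps ^ 2 <= isum x (IFin b d) ^ 2).
    { intros N. apply NNPP; intro Hnb. apply Hno. exists N.
      assert (Hlt : forall n m, (N <= m < n)%nat -> Rabs (sum_f_R0 u n - sum_f_R0 u m) < eps).
      { intros n m Hnm. apply Rnot_le_lt; intro Hge. apply Hnb.
        exists (a + S m)%nat, (n - S m)%nat. split; [lia|].
        replace (isum x (IFin (a + S m) (n - S m))) with (sum_f_R0 u n - sum_f_R0 u m)
          by (apply partial_sum_diff; lia).
        rewrite <- (pow2_abs (_ - _)). apply pow_incr. lra. }
      intros n m Hn Hm. unfold R_dist. destruct (Nat.lt_total m n) as [H|[H|H]].
      - apply Hlt; lia.
      - subst. rewrite Rminus_diag, Rabs_R0. lra.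
      - rewrite Rabs_minus_sym. apply Hlt; lia. }
    destruct (INR_archimed (eps ^ 2) (nJ x ^ 2)) as [k Hk]; [nra|].
    destruct (sumsq_blocks_unbounded eps Hb k 0) as [l [Hs [_ Hv]]].
    pose proof (sumsq_le_normJ l Hs). lra. }
  destruct (Rcomplete.R_complete _ HC) as [l Hl].
  exists l. apply is_series_Reals. exact Hl.
Qed.

Lemma isum_cut_rest K c : (min_int K < c)%nat -> in_int K c ->
  isum x K = isum x (cut K c) + isum x (rest K c).
Proof.
  intros Hlt Hc. destruct K as [a d|a]; simpl in *.
  - apply isum_IFin_split. lia.
  - rewrite (Series_incr_n _ (c - a)) by (lia || apply ex_series_tail).
    f_equal; [f_equal; lia|]. apply Series_ext; intros; f_equal; lia.
Qed.

Lemma norming_psumsq_approx f eps N0 : x_norming x f -> 0 < eps -> inF_below f N0 ->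
  exists n, (N0 <= n)%nat /\ inF_below f n /\ nJ x ^ 2 - eps <= psumsq x (fint f) n.
Proof.
  intros [Hf Hn] He HN0. unfold norm_fam in Hn. rewrite normJ_finite in Hn.
  unfold inF_below, inF in *. destruct (fsize f) as [K|].
  - exists K. split; [|split; auto].
    + destruct (Nat.le_gt_cases N0 K) as [H|H]; auto. specialize (HN0 K H). lia.
    + injection Hn as Hn. pose proof (psumsq_nonneg x (fint f) K).
      rewrite <- (sqrt_sqrt (psumsq x (fint f) K)) by auto. rewrite Hn. lra.
  - set (u := fun n => sqrt (psumsq x (fint f) n)).
    assert (Hinc : forall n, u n <= u (S n))
      by (intros n; apply sqrt_le_1_alt, psumsq_mono; lia).
    pose proof (Lim_seq_correct u (ex_lim_seq_incr u Hinc)) as Hl.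
    fold u in Hn. rewrite Hn in Hl.
    assert (H2 : is_lim_seq (fun n => psumsq x (fint f) n) (nJ x * nJ x)).
    { apply is_lim_seq_ext with (2 := is_lim_seq_mult' u u _ _ Hl Hl).
      intros n; apply sqrt_sqrt, psumsq_nonneg. }
    apply is_lim_seq_spec in H2. destruct (H2 (mkposreal eps He)) as [n0 Hn0].
    exists (Nat.max N0 n0). split; [lia|split; auto].
    specialize (Hn0 (Nat.max N0 n0) ltac:(lia)). simpl in Hn0.
    apply Rabs_lt_between in Hn0. simpl. lra.
Qed.

Lemma sqrt_close r eps s : 0 <= r -> 0 < eps -> 0 <= s -> s <= r ^ 2 ->
  r ^ 2 - (eps / 2) ^ 2 <= s -> Rabs (sqrt s - r) < eps.
Proof.
  intros H1 H2 H3 H4 H5. pose proof (sqrt_pos s). pose proof (sqrt_sqrt s H3).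
  set (t := sqrt s) in *.
  assert (t <= r) by nra. assert ((r - t) ^ 2 <= (eps / 2) ^ 2) by nra.
  assert (r - t <= eps / 2) by nra.
  rewrite Rabs_left1 by lra. lra.
Qed.

Lemma norm_fam_of_psumsq_approx f : is_family f ->
  (forall eps, 0 < eps -> exists n, inF_below f n /\ nJ x ^ 2 - eps <= psumsq x (fint f) n) ->
  norm_fam x f = normJ x.
Proof.
  intros Hf Happrox. pose proof nJ_nonneg as H0.
  unfold norm_fam. rewrite normJ_finite.
  destruct (fsize f) as [k|] eqn:Esz.
  - assert (Hk : inF_below f k) by (intros m Hm; unfold inF; rewrite Esz; auto).
    f_equal. rewrite <- (sqrt_pow2 (nJ x)) by auto. f_equal.
    apply Rle_antisym; [apply psumsq_le_normJ; auto|].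
    apply le_epsilon. intros eps He. destruct (Happrox eps He) as [n [Hn Hv]].
    assert (n <= k)%nat.
    { destruct (Nat.le_gt_cases n k) as [H|H]; auto. specialize (Hn k H).
      unfold inF in Hn. rewrite Esz in Hn. lia. }
    pose proof (psumsq_mono x (fint f) n k H). lra.
  - assert (Hall : forall n, inF_below f n) by (intros n m _; unfold inF; rewrite Esz; auto).
    apply is_lim_seq_unique, is_lim_seq_spec. intros eps.
    destruct (Happrox ((eps / 2) ^ 2)) as [n0 [_ Hv]]; [pose proof (cond_pos eps); nra|].
    exists n0. intros n Hn. apply sqrt_close; auto using cond_pos, psumsq_nonneg.
    + apply psumsq_le_normJ; auto.
    + pose proof (psumsq_mono x (fint f) n0 n Hn). lra.
Qed.

(** * Exchange and subdivision inequalities *)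

Lemma sumsq_slot_le f i g j m n :
  is_family f -> is_family g -> inF f i -> m <> nil -> int_sorted m -> in_slot f i g j m ->
  (S j <= n)%nat -> inF_below g n ->
  sumsq_list x m <=
    nJ x ^ 2 - psumsq x (fint f) i - (psumsq x (fint g) n - psumsq x (fint g) (S j)).
Proof.
  intros Hf Hg Hi Hm Hs Hslot Hn HR.
  set (pre := map (fint f) (seq 0 i)). set (suf := map (fint g) (seq (S j) (n - S j))).
  assert (Hpre : int_sorted pre)
    by (apply family_sorted; auto; intros k Hk; apply inF_le with i; auto; lia).
  assert (Hsuf : int_sorted suf)
    by (apply family_sorted; auto; replace (S j + (n - S j))%nat with n by lia; auto).
  assert (Hmsuf : forall a b, In a m -> In b suf -> int_lt a b).
  { intros a b Ha Hb p q Hp Hq. apply in_map_iff in Hb as [k [<- Hk]]. apply in_seq in Hk.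
    apply (proj2 (Hslot a p Ha Hp) k q); [lia|apply HR; lia|auto]. }
  assert (Hprem : forall a b, In a pre -> In b (m ++ suf) -> int_lt a b).
  { intros a b Ha Hb p q Hp Hq. apply in_map_iff in Ha as [k [<- Hk]]. apply in_seq in Hk.
    destruct m as [|K0 m']; [congruence|].
    destruct (Hslot K0 (min_int K0) (or_introl eq_refl) (in_int_min K0)) as [Ha0 Hb0].
    apply in_app_or in Hb as [Hb|Hb].
    - apply (proj1 (Hslot b q Hb Hq) k p); [lia|auto].
    - apply in_map_iff in Hb as [k' [<- Hk']]. apply in_seq in Hk'.
      pose proof (Ha0 k p ltac:(lia) Hp). pose proof (Hb0 k' q ltac:(lia) (HR k' ltac:(lia)) Hq).
      lia. }
  assert (Hsorted : int_sorted (pre ++ m ++ suf))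
    by (apply int_sorted_app; auto; apply int_sorted_app; auto).
  pose proof (sumsq_le_normJ _ Hsorted) as H.
  rewrite !sumsq_app in H. unfold pre, suf in H. rewrite !sumsq_map_seq in H.
  replace (S j + (n - S j))%nat with n in H by lia. rewrite Nat.add_0_l in H.
  change (psumsq x (fint f) 0) with 0 in H. lra.
Qed.

(* Splicing [f]'s intervals before [i], then [m1], then [g]'s intervals after [j]
   (and symmetrically with [m2]) gives two admissible lists, of total at most
   [2 ||x||^2]; far enough out, [f] and [g] each nearly attain [||x||^2]. *)
Lemma exchange_le f g i j m1 m2 : x_norming x f -> x_norming x g -> inF f i -> inF g j ->
  m1 <> nil -> m2 <> nil -> int_sorted m1 -> int_sorted m2 ->
  in_slot f i g j m1 -> in_slot g j f i m2 ->
  sumsq_list x m1 + sumsq_list x m2 <= isum x (fint f i) ^ 2 + isum x (fint g j) ^ 2.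
Proof.
  intros Hnf Hng Hi Hj Hm1 Hm2 Hs1 Hs2 Hp1 Hp2. apply le_epsilon; intros eps He.
  destruct (norming_psumsq_approx f (eps / 2) (S i) Hnf ltac:(lra)) as [nf [Hnf1 [Hnf2 Hnf3]]].
  { intros k Hk; apply inF_le with i; auto; lia. }
  destruct (norming_psumsq_approx g (eps / 2) (S j) Hng ltac:(lra)) as [ng [Hng1 [Hng2 Hng3]]].
  { intros k Hk; apply inF_le with j; auto; lia. }
  destruct Hnf as [Hf _], Hng as [Hg _].
  pose proof (sumsq_slot_le f i g j m1 ng Hf Hg Hi Hm1 Hs1 Hp1 Hng1 Hng2).
  pose proof (sumsq_slot_le g j f i m2 nf Hg Hf Hj Hm2 Hs2 Hp2 Hnf1 Hnf2).
  simpl psumsq in *. lra.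
Qed.

Lemma norming_subdivision_le f i m : x_norming x f -> inF f i -> int_sorted m ->
  (forall K n, In K m -> in_int K n -> in_int (fint f i) n) ->
  sumsq_list x m <= isum x (fint f i) ^ 2.
Proof.
  intros Hn Hi Hs Hm. destruct m as [|K m]; [apply pow2_ge_0|].
  assert (Hf : is_family f) by apply Hn.
  assert (Hsingle : sumsq_list x (fint f i :: nil) = isum x (fint f i) ^ 2) by (simpl; ring).
  enough (sumsq_list x (K :: m) + sumsq_list x (fint f i :: nil) <=
          isum x (fint f i) ^ 2 + isum x (fint f i) ^ 2) by lra.
  apply exchange_le; auto using int_sorted_single; try discriminate;
    apply in_slot_within; auto. intros K' n [<-|[]]; auto.
Qed.

Lemma isum_cut_split K u c : (min_int K < u < c)%nat ->
  isum x (cut K c) = isum x (cut K u) + isum x (cut (rest K u) c).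
Proof.
  intros H. unfold cut at 1 3. rewrite (isum_IFin_split _ _ _ u) by lia.
  unfold cut. rewrite min_rest. do 3 f_equal. lia.
Qed.

Lemma isum_rest_split K u v : in_int K u -> (u < v)%nat -> in_int K v ->
  isum x (rest K u) = isum x (cut (rest K u) v) + isum x (rest K v).
Proof.
  intros Hu Huv Hv. rewrite <- (rest_rest K u v) by (auto; lia).
  apply isum_cut_rest; [rewrite min_rest; auto|]. apply in_rest; auto with arith.
Qed.

Section Subdivisions.
Variables (f : ifamily) (i : nat).
Hypothesis Hn : x_norming x f.
Hypothesis Hi : inF f i.
Let K := fint f i.

Lemma norming_split2 c : (min_int K < c)%nat -> in_int K c ->
  isum x (cut K c) ^ 2 + isum x (rest K c) ^ 2 <= isum x K ^ 2.
Proof.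
  intros Hc Hin.
  replace (isum x (cut K c) ^ 2 + isum x (rest K c) ^ 2)
    with (sumsq_list x (cut K c :: rest K c :: nil)) by (simpl; ring).
  apply norming_subdivision_le; auto.
  - apply int_sorted_pair. intros p q Hp Hq.
    apply in_cut in Hp; auto. apply in_rest in Hq; auto. lia.
  - intros K' n [<-|[<-|[]]] Hn'.
    + apply in_cut in Hn'; auto.
      apply in_int_between with (min_int K) c; auto using in_int_min. lia.
    + apply in_rest in Hn'; tauto.
Qed.

Lemma norming_split3 u v : (min_int K < u < v)%nat -> in_int K v ->
  isum x (cut K u) ^ 2 + isum x (cut (rest K u) v) ^ 2 + isum x (rest K v) ^ 2 <= isum x K ^ 2.
Proof.
  intros Huv Hin.
  assert (Hu : in_int K u) by (apply in_int_between with (min_int K) v; auto using in_int_min; lia).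
  replace (isum x (cut K u) ^ 2 + isum x (cut (rest K u) v) ^ 2 + isum x (rest K v) ^ 2)
    with (sumsq_list x (cut K u :: cut (rest K u) v :: rest K v :: nil)) by (simpl; ring).
  assert (Hmid : forall n, in_int (cut (rest K u) v) n <-> (u <= n < v)%nat)
    by (intros n; rewrite in_cut; rewrite min_rest; lia).
  apply norming_subdivision_le; auto.
  - apply int_sorted_triple; intros p q Hp Hq.
    + apply in_cut in Hp; [|lia]. apply Hmid in Hq. lia.
    + apply Hmid in Hp. apply in_rest in Hq; auto. lia.
  - intros K' n [<-|[<-|[<-|[]]]] Hn'.
    + apply in_cut in Hn'; [|lia].
      apply in_int_between with (min_int K) v; auto using in_int_min. lia.
    + apply Hmid in Hn'. apply in_int_between with u v; auto. lia.
    + apply in_rest in Hn'; tauto.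
Qed.

Lemma norming_cut_neq0 c : supp x (min_int K) -> (min_int K < c)%nat -> in_int K c ->
  isum x (cut K c) <> 0.
Proof.
  intros Hsa Hc Hin. set (a := min_int K) in *.
  destruct (Nat.eq_dec c (S a)) as [->|Hne].
  - unfold cut. fold a. replace (S a - 1 - a)%nat with 0%nat by lia. rewrite isum_point. auto.
  - pose proof (norming_split3 (S a) c ltac:(lia) Hin) as H.
    rewrite (isum_cut_rest K (S a)), (isum_rest_split K (S a) c) in H
      by (auto; try lia; apply in_int_between with a c; auto using in_int_min; lia).
    rewrite (isum_cut_split K (S a) c) by lia.
    assert (Hxa : isum x (cut K (S a)) = x a).
    { unfold cut. fold a. replace (S a - 1 - a)%nat with 0%nat by lia. apply isum_point. }
    rewrite Hxa in *. intros H0. apply Hsa. nra.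
Qed.

Lemma norming_rest_neq0 c : (min_int K < c)%nat -> in_int K c -> supp x c ->
  isum x (rest K c) <> 0.
Proof.
  intros Hc Hin Hxc.
  assert (Hxc' : isum x (cut (rest K c) (S c)) = x c).
  { unfold cut. rewrite min_rest. replace (S c - 1 - c)%nat with 0%nat by lia. apply isum_point. }
  destruct (classic (in_int K (S c))) as [HS|HS].
  - pose proof (norming_split3 c (S c) ltac:(lia) HS) as H.
    rewrite (isum_cut_rest K c), (isum_rest_split K c (S c)) in H by (auto; lia).
    rewrite (isum_rest_split K c (S c)) by (auto; lia). rewrite Hxc' in *.
    intros H0. apply Hxc. nra.
  - unfold K in *. destruct (fint f i) as [a d|a]; simpl in Hin, HS; cbn [rest]; [|lia].
    replace (a + d - c)%nat with 0%nat by lia. rewrite isum_point. auto.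
Qed.

End Subdivisions.

Lemma norming_gap_zero f i n : x_norming x f -> inF f i -> after_prefix f i n ->
  (n < min_int (fint f i))%nat -> x n = 0.
Proof.
  intros Hn Hi Hap Hlt. assert (Hf : is_family f) by apply Hn.
  assert (Hwithin : in_slot f i f i (fint f i :: nil))
    by (apply in_slot_within; auto; intros K m [<-|[]]; auto).
  pose proof (exchange_le f f i i (IFin n 0 :: fint f i :: nil) (fint f i :: nil) Hn Hn Hi Hi
    ltac:(discriminate) ltac:(discriminate)) as H.
  cbn [sumsq_list fold_right] in H. rewrite isum_point in H.
  enough (x n ^ 2 <= 0) by nra.
  enough (x n ^ 2 + (isum x (fint f i) ^ 2 + 0) + (isum x (fint f i) ^ 2 + 0) <=
          isum x (fint f i) ^ 2 + isum x (fint f i) ^ 2) by lra.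
  apply H; auto using int_sorted_single.
  - apply int_sorted_pair. intros p q Hp Hq. simpl in Hp. pose proof (min_int_le _ _ Hq). lia.
  - intros K p [<-|[<-|[]]] Hp; [|apply (Hwithin _ p (or_introl eq_refl) Hp)].
    simpl in Hp. replace p with n by lia. split; auto.
    apply before_suffix_of_le with (min_int (fint f i)); auto using in_int_min. lia.
Qed.

Lemma norming_gap_zero_succ f i b n : x_norming x f -> inF f (S i) ->
  max_int (fint f i) = Some b -> (b < n < min_int (fint f (S i)))%nat -> x n = 0.
Proof.
  intros Hn Hi Hb Hbn. apply (norming_gap_zero f (S i)); auto; [|lia].
  apply after_prefix_succ with b; auto; [apply Hn|lia].
Qed.

Lemma partition_min_supp f i : x_norming_partition x f -> inF f i -> supp x (min_int (fint f i)).
Proof.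
  intros [_ [Hmid Hlast]] Hi. destruct (classic (inF f (S i))) as [HS|HS].
  - apply (Hmid i Hi HS).
  - apply Hlast. unfold inF in *. destruct (fsize f); [f_equal; lia|tauto].
Qed.

Lemma partition_covers f n : x_norming_partition x f -> supp x n ->
  exists i, inF f i /\ in_int (fint f i) n.
Proof.
  intros Hp Hs. assert (Hf : is_family f) by apply Hp.
  apply NNPP; intro Hno. assert (Hout : forall i, inF f i -> ~ in_int (fint f i) n) by eauto.
  destruct (classic (exists i, inF f i /\ (n < min_int (fint f i))%nat)) as [Hex|Hnex].
  - destruct (nat_least_witness _ Hex) as [i [[Hi Hlt] Hmin]].
    apply Hs, (norming_gap_zero f i n (proj1 Hp) Hi); auto.
    destruct i as [|i]; [intros k m Hk; lia|].
    assert (Hi' : inF f i) by (apply inF_le with (S i); auto).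
    destruct (Hf i Hi) as [b [Hb _]]. apply after_prefix_succ with b; auto.
    assert (min_int (fint f i) <= n)%nat by (apply Nat.nlt_ge; intro; apply (Hmin i); auto).
    apply Nat.nle_gt; intro. apply (Hout i Hi').
    apply in_int_between with (min_int (fint f i)) b; auto using in_int_min, in_int_max.
  - destruct Hp as [[_ Hnorm] [_ Hlast]]. unfold inF in *.
    destruct (fsize f) as [[|i]|] eqn:Hsz.
    + unfold norm_fam in Hnorm. rewrite Hsz, normJ_finite in Hnorm. simpl in Hnorm.
      injection Hnorm as Hnorm. rewrite sqrt_0 in Hnorm.
      pose proof (sumsq_le_normJ _ (int_sorted_single (IFin n 0))) as H.
      cbn [sumsq_list fold_right] in H. rewrite isum_point, <- Hnorm in H. apply Hs. nra.
    + destruct (Hlast i eq_refl) as [_ Hsup]. specialize (Hout i ltac:(lia)).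
      assert (min_int (fint f i) <= n)%nat by (apply Nat.nlt_ge; intro; apply Hnex; exists i; auto).
      unfold sup_eq_supp in Hsup. destruct (fint f i) as [a d|a]; simpl in *; [|lia].
      apply (proj2 Hsup n); auto. lia.
    + apply Hnex. exists (S n). split; auto.
      pose proof (family_index_le_min f Hf (S n) ltac:(unfold inF; rewrite Hsz; auto)). lia.
Qed.

Lemma partition_mem_iff f i n : x_norming_partition x f -> inF f i -> supp x n ->
  in_int (fint f i) n <-> (min_int (fint f i) <= n)%nat /\
    (inF f (S i) -> (n < min_int (fint f (S i)))%nat).
Proof.
  intros Hp Hi Hs. assert (Hf : is_family f) by apply Hp. split.
  - intros Hn. split; [apply min_int_le; auto|].
    intros HS. apply (family_succ_lt f Hf i HS n _ Hn (in_int_min _)).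
  - intros [H1 H2]. destruct (partition_covers f n Hp Hs) as [k [Hk Hkn]].
    destruct (Nat.lt_total k i) as [H|[H|H]].
    + pose proof (family_lt f Hf k i Hi H n _ Hkn (in_int_min _)). lia.
    + subst; auto.
    + assert (HS : inF f (S i)) by (apply inF_le with k; auto).
      specialize (H2 HS). pose proof (min_int_le _ _ Hkn).
      destruct (Nat.eq_dec k (S i)) as [->|Hne]; [lia|].
      pose proof (family_min_lt f Hf (S i) k Hk ltac:(lia)). lia.
Qed.

Lemma isum_rest_skip_zeros K c e : (min_int K <= c <= e)%nat -> in_int K e ->
  (forall p, (c <= p < e)%nat -> x p = 0) -> isum x (rest K c) = isum x (rest K e).
Proof.
  intros Hce He Hz. destruct (Nat.eq_dec c e) as [->|Hne]; auto.
  rewrite (isum_rest_split K c e) by (auto; try lia; apply in_int_between with (min_int K) e;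
    auto using in_int_min; lia).
  unfold cut. rewrite min_rest, isum_zero; [lra|]. intros; apply Hz; lia.
Qed.

Lemma partition_next_start f i b e : x_norming_partition x f -> inF f i ->
  max_int (fint f i) = Some b -> supp x e -> (b < e)%nat ->
  inF f (S i) /\ (min_int (fint f (S i)) <= e)%nat.
Proof.
  intros Hp Hi Hb He Hbe. assert (Hf : is_family f) by apply Hp.
  destruct (partition_covers f e Hp He) as [k [Hk Hke]].
  assert (Hik : (i < k)%nat).
  { destruct (Nat.lt_total i k) as [H|[H|H]]; auto.
    - subst. pose proof (le_max_int _ _ _ Hb Hke). lia.
    - pose proof (family_lt f Hf k i Hi H e b Hke (in_int_max _ _ Hb)). lia. }
  assert (HSi : inF f (S i)) by (apply inF_le with k; auto).
  split; auto. destruct (Nat.eq_dec k (S i)) as [<-|Hne]; [apply min_int_le; auto|].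
  pose proof (family_lt f Hf (S i) k Hk ltac:(lia) _ e (in_int_min _) Hke). lia.
Qed.

Lemma no_crossing_algebra A B C : A <> 0 -> B <> 0 -> C <> 0 ->
  A ^ 2 + B ^ 2 <= (A + B) ^ 2 -> B ^ 2 + C ^ 2 <= (B + C) ^ 2 ->
  (A + B + C) ^ 2 + B ^ 2 <= (A + B) ^ 2 + (B + C) ^ 2 -> False.
Proof.
  intros HA HB HC H1 H2 H3.
  assert (HAB : 0 < A * B).
  { assert (A * B <> 0) by (apply Rmult_integral_contrapositive; auto). nra. }
  assert (HBC : 0 < B * C).
  { assert (B * C <> 0) by (apply Rmult_integral_contrapositive; auto). nra. }
  assert (0 < (A * B) * (B * C)) by (apply Rmult_lt_0_compat; auto).
  assert (0 < B * B) by nra.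
  nra.
Qed.

(* Exchanging two crossing intervals [f_i = [a, b]] and [g_j = [c, sup g_j]]
   (with [a < c <= b]) for their union and their intersection. *)
Lemma crossing_exchange_le f g i j b : x_norming x f -> x_norming x g -> inF f i -> inF g j ->
  max_int (fint f i) = Some b -> (min_int (fint f i) < min_int (fint g j) <= b)%nat ->
  isum x (rest (fint g j) (min_int (fint f i))) ^ 2 + isum x (cut (fint g j) (S b)) ^ 2 <=
  isum x (fint f i) ^ 2 + isum x (fint g j) ^ 2.
Proof.
  intros Hnf Hng Hi Hj Hb Hac.
  assert (Hf : is_family f) by apply Hnf. assert (Hg : is_family g) by apply Hng.
  replace (isum x (rest (fint g j) (min_int (fint f i))) ^ 2 + isum x (cut (fint g j) (S b)) ^ 2)
    with (sumsq_list x (rest (fint g j) (min_int (fint f i)) :: nil) +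
          sumsq_list x (cut (fint g j) (S b) :: nil)) by (simpl; ring).
  apply exchange_le; auto using int_sorted_single; try discriminate.
  - intros K p [<-|[]] Hp. split.
    + apply after_prefix_of_min_le; auto. apply min_int_le in Hp. rewrite min_rest in Hp. lia.
    + destruct (rest_below_point (fint g j) (min_int (fint f i)) p ltac:(lia) Hp)
        as [n' [Hn' Hpn']].
      apply before_suffix_of_le with n'; auto.
  - intros K p [<-|[]] Hp. apply in_cut in Hp; [|lia]. split.
    + apply after_prefix_of_min_le; auto. lia.
    + apply before_suffix_of_le with b; auto using in_int_max. lia.
Qed.

(* With [A], [B], [C] the sums over [[a, c)], [[c, b]] and [(b, sup g_j]], the
   two subdivisions and the crossing exchange give inequalities that
   [no_crossing_algebra] shows to be inconsistent; [C <> 0] because [x]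
   vanishes between [f_i] and [f_(i+1)], whose start lies in [g_j]. *)
Lemma partition_no_crossing f g i j b e :
  x_norming_partition x f -> x_norming_partition x g -> inF f i -> inF g j ->
  max_int (fint f i) = Some b ->
  (min_int (fint f i) < min_int (fint g j) <= b)%nat ->
  supp x e -> in_int (fint g j) e -> (e <= b)%nat.
Proof.
  intros Hpf Hpg Hi Hj Hb Hac He Hge. apply Nat.nlt_ge; intro Hbe.
  assert (Hnf : x_norming x f) by apply Hpf. assert (Hng : x_norming x g) by apply Hpg.
  assert (Hf : is_family f) by apply Hpf.
  destruct (partition_next_start f i b e Hpf Hi Hb He Hbe) as [HSi He'e].
  assert (Hbe' : (b < min_int (fint f (S i)))%nat)
    by (destruct (Hf i HSi) as [b' [Hb' Hlt]]; rewrite Hb in Hb'; injection Hb' as <-; auto).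
  assert (Hsa : supp x (min_int (fint f i))) by (apply partition_min_supp; auto).
  assert (Hsc : supp x (min_int (fint g j))) by (apply partition_min_supp; auto).
  assert (Hse' : supp x (min_int (fint f (S i)))) by (apply partition_min_supp; auto).
  pose proof (crossing_exchange_le f g i j b Hnf Hng Hi Hj Hb Hac) as Hexch.
  remember (min_int (fint f i)) as a eqn:Ha. remember (min_int (fint g j)) as c eqn:Hc.
  remember (min_int (fint f (S i))) as e' eqn:He'.
  assert (Hgc : in_int (fint g j) c) by (subst c; apply in_int_min).
  assert (Hge' : in_int (fint g j) e') by (apply in_int_between with c e; auto; lia).
  assert (HgSb : in_int (fint g j) (S b)) by (apply in_int_between with c e; auto; lia).
  assert (Hfc : in_int (fint f i) c)
    by (apply in_int_between with a b; subst a; auto using in_int_min, in_int_max; lia).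
  set (A := isum x (cut (fint f i) c)). set (B := isum x (rest (fint f i) c)).
  set (C := isum x (rest (fint g j) (S b))).
  assert (HBg : isum x (cut (fint g j) (S b)) = B).
  { unfold B, cut. rewrite <- Hc. destruct (fint f i) as [a0 d|]; [|discriminate].
    injection Hb as <-. cbn [rest]. do 2 f_equal. lia. }
  assert (HW : isum x (rest (fint g j) a) = A + B + C).
  { rewrite (isum_cut_rest _ c) by (rewrite ?min_rest; try apply in_rest_of_le; auto; lia).
    rewrite rest_rest by (auto; lia). rewrite Hc, rest_min_int, <- Hc.
    rewrite (isum_cut_rest (fint g j) (S b)) by (auto; lia). rewrite HBg.
    unfold A, C, cut. rewrite min_rest, <- Ha. lra. }
  assert (Hfi : A + B = isum x (fint f i)) by (symmetry; apply isum_cut_rest; auto; lia).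
  assert (Hgj : B + C = isum x (fint g j))
    by (rewrite <- HBg; symmetry; apply isum_cut_rest; auto; lia).
  apply (no_crossing_algebra A B C).
  - apply (norming_cut_neq0 f i Hnf Hi); rewrite <- ?Ha; auto; lia.
  - rewrite <- HBg. apply (norming_cut_neq0 g j Hng Hj); rewrite <- ?Hc; auto; lia.
  - unfold C. rewrite (isum_rest_skip_zeros _ (S b) e'); auto; try lia.
    + apply (norming_rest_neq0 g j Hng Hj); auto; lia.
    + intros p Hp. apply (norming_gap_zero_succ f i b p Hnf); auto; lia.
  - rewrite Hfi. apply (norming_split2 f i Hnf Hi); auto; lia.
  - rewrite Hgj, <- HBg. apply (norming_split2 g j Hng Hj); auto; lia.
  - rewrite <- HW, Hfi, Hgj, <- HBg. auto.
Qed.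
End JNorm.

(** * Counting and enumerating start points *)

Fixpoint count (P : nat -> Prop) (r : nat) : nat :=
  match r with
  | O => O
  | S r' => (count P r' + if excluded_middle_informative (P r') then 1 else 0)%nat
  end.

Definition in_index (sz : option nat) (p : nat) : Prop :=
  match sz with Some k => (p < k)%nat | None => True end.

Lemma in_index_le sz p q : in_index sz q -> (p <= q)%nat -> in_index sz p.
Proof. unfold in_index; destruct sz; auto; lia. Qed.

Section Counting.
Variable P : nat -> Prop.

Lemma count_S_in r : P r -> count P (S r) = S (count P r).
Proof. intros H. simpl. destruct (excluded_middle_informative (P r)); [lia|tauto]. Qed.

Lemma count_S_out r : ~ P r -> count P (S r) = count P r.
Proof. intros H. simpl. destruct (excluded_middle_informative (P r)); [tauto|lia]. Qed.

Lemma count_mono r r' : (r <= r')%nat -> (count P r <= count P r')%nat.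
Proof. induction 1 as [|r' _ IH]; simpl; lia. Qed.

Lemma count_lt r r' : P r -> (r < r')%nat -> (count P r < count P r')%nat.
Proof.
  intros H Hr. pose proof (count_mono (S r) r' Hr) as Hm. rewrite count_S_in in Hm by auto. lia.
Qed.

Lemma count_inj r s : P r -> P s -> count P r = count P s -> r = s.
Proof.
  intros Hr Hs E. destruct (Nat.lt_total r s) as [H|[H|H]]; auto.
  - pose proof (count_lt r s Hr H); lia.
  - pose proof (count_lt s r Hs H); lia.
Qed.

Lemma count_const a b : (a <= b)%nat -> (forall s, (a <= s < b)%nat -> ~ P s) ->
  count P b = count P a.
Proof.
  induction 1 as [|b Hab IH]; intros Hno; auto.
  rewrite count_S_out by (apply Hno; lia). apply IH. intros s Hs. apply Hno. lia.
Qed.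

Lemma count_attained r q : (q < count P r)%nat -> exists s, P s /\ count P s = q.
Proof.
  induction r as [|r IH]; intros Hq; [simpl in Hq; lia|].
  destruct (classic (P r)) as [HP|HP].
  - rewrite count_S_in in Hq by auto.
    destruct (Nat.eq_dec q (count P r)) as [->|Hne]; [eauto|apply IH; lia].
  - rewrite count_S_out in Hq by auto. auto.
Qed.

Lemma count_bounded_max K : (forall r, (count P r <= K)%nat) ->
  exists r0, forall r, (count P r <= count P r0)%nat.
Proof.
  induction K as [|K IH]; intros HK.
  - exists 0%nat. intros r. specialize (HK r). simpl. lia.
  - destruct (classic (exists r, count P r = S K)) as [[r0 Hr0]|Hn].
    + exists r0. intros r. rewrite Hr0. auto.
    + apply IH. intros r. specialize (HK r).
      destruct (Nat.eq_dec (count P r) (S K)); [exfalso; eauto|lia].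
Qed.

(* The number of elements of [P] ([None] if infinite), read off as the
   maximum of [count P]. *)
Definition enum_size : option nat :=
  match excluded_middle_informative (exists r0, forall r, (count P r <= count P r0)%nat) with
  | left H => Some (count P (proj1_sig (constructive_indefinite_description _ H)))
  | right _ => None
  end.

Definition enum (q : nat) : nat := epsilon (inhabits 0%nat) (fun r => P r /\ count P r = q).

Lemma in_enum_size q : in_index enum_size q <-> exists r, (q < count P r)%nat.
Proof.
  unfold enum_size, in_index.
  destruct (excluded_middle_informative _) as [H|Hn].
  - destruct (constructive_indefinite_description _ H) as [r0 Hr0]; simpl.
    split; [eauto|]. intros [r Hr]. specialize (Hr0 r). lia.
  - split; auto. intros _. apply NNPP; intro Hq. apply Hn, (count_bounded_max q).
    intros r. apply Nat.nlt_ge. intro. apply Hq. eauto.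
Qed.

Lemma enum_spec q : in_index enum_size q -> P (enum q) /\ count P (enum q) = q.
Proof.
  intros Hq. apply in_enum_size in Hq as [r Hr].
  apply (epsilon_spec (inhabits 0%nat) (fun r => P r /\ count P r = q)).
  apply (count_attained r q Hr).
Qed.

Lemma in_enum_size_count r : P r -> in_index enum_size (count P r).
Proof. intros H. apply in_enum_size. exists (S r). rewrite count_S_in; auto. Qed.

Lemma enum_count r : P r -> enum (count P r) = r.
Proof.
  intros H. destruct (enum_spec _ (in_enum_size_count r H)) as [HP Hc].
  apply count_inj; auto.
Qed.

Lemma enum_lt p q : in_index enum_size q -> (p < q)%nat -> (enum p < enum q)%nat.
Proof.
  intros Hq Hpq. destruct (enum_spec q Hq) as [_ Hcq].
  destruct (enum_spec p (in_index_le _ p q Hq ltac:(lia))) as [_ Hcp].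
  apply Nat.nle_gt. intros Hle. pose proof (count_mono _ _ Hle). lia.
Qed.

Lemma enum_le p q : in_index enum_size q -> (p <= q)%nat -> (enum p <= enum q)%nat.
Proof.
  intros Hq Hpq. destruct (Nat.eq_dec p q) as [->|Hne]; auto.
  pose proof (enum_lt p q Hq ltac:(lia)). lia.
Qed.

Lemma enum_lt_inv p q : in_index enum_size p -> in_index enum_size q ->
  (enum p < enum q)%nat -> (p < q)%nat.
Proof.
  intros Hp Hq H. apply Nat.nle_gt. intros Hle. pose proof (enum_le q p Hp Hle). lia.
Qed.

Lemma enum_succ_le p r : in_index enum_size p -> P r -> (enum p < r)%nat ->
  in_index enum_size (S p) /\ (enum (S p) <= r)%nat.
Proof.
  intros Hp Hr H. rewrite <- (enum_count r Hr) in H |- *.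
  pose proof (in_enum_size_count r Hr) as Hq.
  pose proof (enum_lt_inv p _ Hp Hq H).
  split; [apply in_index_le with (count P r); auto|apply enum_le; auto].
Qed.

(* The witness is [count P (S n) - 1]. *)
Lemma enum_locate n : (exists a, P a /\ (a <= n)%nat) ->
  exists q, in_index enum_size q /\ (enum q <= n)%nat /\
    (in_index enum_size (S q) -> (n < enum (S q))%nat).
Proof.
  intros [a [Ha Han]].
  assert (Hpos : (count P (S a) <= count P (S n))%nat) by (apply count_mono; lia).
  rewrite count_S_in in Hpos by auto.
  exists (pred (count P (S n))).
  assert (Hq : in_index enum_size (pred (count P (S n))))
    by (apply in_enum_size; exists (S n); lia).
  destruct (enum_spec _ Hq) as [_ Hc]. split; [auto|split].
  - apply Nat.nlt_ge. intros Hlt. pose proof (count_mono (S n) _ Hlt). lia.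
  - intros HSq. destruct (enum_spec _ HSq) as [HP HSc]. apply Nat.nle_gt. intros Hle.
    pose proof (count_mono _ _ (le_n_S _ _ Hle)) as Hm. rewrite count_S_in in Hm by auto. lia.
Qed.

Lemma enum_block a (B : Prop) b : P a -> (B -> P b /\ (a < b)%nat) ->
  exists K, forall p, in_int K p <->
    in_index enum_size p /\ (count P a <= p)%nat /\ (B -> (enum p < b)%nat).
Proof.
  intros Ha HB. destruct (classic B) as [HBt|HBf].
  - destruct (HB HBt) as [Hb Hab]. pose proof (count_lt a b Ha Hab).
    pose proof (in_enum_size_count b Hb) as Hcb.
    exists (IFin (count P a) (count P b - 1 - count P a)). intros p; simpl. split.
    + intros Hp. split; [apply in_index_le with (count P b); auto; lia|split; [lia|]].
      intros _. rewrite <- (enum_count b Hb). apply enum_lt; auto. lia.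
    + intros [Hp [Hap Hlt]]. specialize (Hlt HBt). rewrite <- (enum_count b Hb) in Hlt.
      pose proof (enum_lt_inv p _ Hp Hcb Hlt). lia.
  - pose proof (in_enum_size_count a Ha). unfold in_index in *.
    destruct enum_size as [k|].
    + exists (IFin (count P a) (k - 1 - count P a)). intros p; simpl.
      split; [intros Hp; split; [lia|split; [lia|tauto]]|intros [Hp [Hap _]]; lia].
    + exists (IInf (count P a)). intros p; simpl. tauto.
Qed.

End Counting.

Definition family_start (f : ifamily) (r : nat) : Prop :=
  exists i, inF f i /\ min_int (fint f i) = r.

Section FamilyCount.
Variable f : ifamily.
Hypothesis Hf : is_family f.

Lemma count_family_start i : inF f i -> count (family_start f) (min_int (fint f i)) = i.
Proof.
  induction i as [|i IH]; intros Hi.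
  - rewrite (count_const _ 0); [reflexivity|lia|].
    intros s Hs [k [Hk Hks]]. destruct k as [|k]; [lia|].
    pose proof (family_min_lt f Hf 0 (S k) Hk ltac:(lia)). lia.
  - assert (Hi' : inF f i) by (apply inF_le with (S i); auto).
    pose proof (family_min_lt f Hf i (S i) Hi ltac:(lia)).
    rewrite (count_const _ (S (min_int (fint f i)))); [|lia|].
    + rewrite count_S_in by (exists i; auto). rewrite IH; auto.
    + intros s Hs [k [Hk Hks]].
      pose proof (family_min_lt_inv f Hf i k Hi' Hk ltac:(lia)).
      pose proof (family_min_lt_inv f Hf k (S i) Hk Hi ltac:(lia)). lia.
Qed.

Lemma family_start_count r : family_start f r ->
  inF f (count (family_start f) r) /\ min_int (fint f (count (family_start f) r)) = r.
Proof. intros [i [Hi <-]]. rewrite count_family_start; auto. Qed.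

Lemma lt_count_family_start i r : inF f i -> (min_int (fint f i) < r)%nat ->
  (i < count (family_start f) r)%nat.
Proof.
  intros Hi Hr. rewrite <- (count_family_start i Hi) at 1.
  apply count_lt; auto. exists i; auto.
Qed.

Lemma count_family_start_ge n : inF_below f n ->
  exists r0, forall r, (r0 <= r)%nat -> (n <= count (family_start f) r)%nat.
Proof.
  destruct n as [|k]; intros Hn; [exists 0%nat; lia|].
  exists (S (min_int (fint f k))). intros r Hr.
  pose proof (lt_count_family_start k r (Hn k ltac:(lia)) ltac:(lia)). lia.
Qed.

Lemma family_start_points_lt s r m : family_start f s -> family_start f r -> (s < r)%nat ->
  in_int (fint f (count (family_start f) s)) m -> (m < r)%nat.
Proof.
  intros Hs Hr Hsr Hm.
  destruct (family_start_count s Hs) as [Hs1 Hs2]. destruct (family_start_count r Hr) as [Hr1 Hr2].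
  assert (Hlt : (count (family_start f) s < count (family_start f) r)%nat)
    by (apply count_lt; auto).
  pose proof (family_lt f Hf _ _ Hr1 Hlt m _ Hm (in_int_min _)). lia.
Qed.

End FamilyCount.

(** * Merging two norming partitions *)

Definition candidate (P : nat -> Prop) (h : ifamily) (k p : nat) : Prop :=
  inF h k /\ min_int (fint h k) = enum P p /\
  ((inF h (S k) /\ in_index (enum_size P) (S p) /\ min_int (fint h (S k)) = enum P (S p)) \/
   (~ inF h (S k) /\ ~ in_index (enum_size P) (S p))).

Section Candidates.
Variable x : nat -> R.
Hypothesis HJ : in_J x.
Variables (P : nat -> Prop) (f g : ifamily).
Hypothesis Hpf : x_norming_partition x f.
Hypothesis Hpg : x_norming_partition x g.
Hypothesis HP : forall r, P r <-> family_start f r \/ family_start g r.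

(* If the next start point after [f_i]'s lies inside [f_i] and belongs to [g],
   the interval of [g] containing [f_i]'s start must begin there too: otherwise
   it would cross [f_i]. *)
Lemma candidate_of_next_other i p :
  inF f i -> min_int (fint f i) = enum P p ->
  in_index (enum_size P) p -> in_index (enum_size P) (S p) ->
  family_start g (enum P (S p)) -> in_int (fint f i) (enum P (S p)) ->
  exists m, candidate P g m p.
Proof.
  intros Hi Hmi Hp HSp [j' [Hj' Hmj']] Hin.
  assert (Hf : is_family f) by apply Hpf. assert (Hg : is_family g) by apply Hpg.
  assert (Hrr' : (enum P p < enum P (S p))%nat) by (apply enum_lt; auto).
  assert (Hsr : supp x (enum P p)) by (rewrite <- Hmi; apply partition_min_supp; auto).
  destruct (partition_covers x HJ g _ Hpg Hsr) as [m [Hm Hrm]].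
  pose proof (min_int_le _ _ Hrm) as Hcm.
  assert (Hmj : (m < j')%nat).
  { apply Nat.nle_gt. intros Hle. destruct (Nat.eq_dec m j') as [->|Hne]; [lia|].
    pose proof (family_min_lt g Hg j' m Hm ltac:(lia)). lia. }
  assert (HSm : inF g (S m)) by (apply inF_le with j'; auto).
  assert (Hnext : min_int (fint g (S m)) = enum P (S p)).
  { assert ((min_int (fint g (S m)) <= enum P (S p))%nat).
    { destruct (Nat.eq_dec (S m) j') as [->|Hne]; [lia|].
      pose proof (family_min_lt g Hg (S m) j' Hj' ltac:(lia)). lia. }
    assert (Hlt : (enum P p < min_int (fint g (S m)))%nat)
      by (apply (family_succ_lt g Hg m HSm); auto using in_int_min).
    assert (HPm : P (min_int (fint g (S m)))) by (apply HP; right; exists (S m); auto).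
    destruct (enum_succ_le P p _ Hp HPm Hlt). lia. }
  destruct (Nat.eq_dec (min_int (fint g m)) (enum P p)) as [E|E].
  - exists m. split; [auto|split; [auto|left; auto]].
  - exfalso. destruct (Hg m HSm) as [bm [Hbm Hlt]].
    pose proof (le_max_int _ _ _ Hbm Hrm).
    assert (Hs' : supp x (enum P (S p))) by (rewrite <- Hmj'; apply partition_min_supp; auto).
    pose proof (partition_no_crossing x HJ g f m i bm (enum P (S p)) Hpg Hpf Hm Hi Hbm
      ltac:(lia) Hs' Hin). lia.
Qed.

Lemma candidate_exists_from i p : inF f i -> min_int (fint f i) = enum P p ->
  in_index (enum_size P) p -> (exists k, candidate P f k p) \/ (exists m, candidate P g m p).
Proof.
  intros Hi Hmi Hp. assert (Hf : is_family f) by apply Hpf.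
  assert (Hother : in_index (enum_size P) (S p) ->
      (forall k, inF f k -> min_int (fint f k) = enum P (S p) -> False) ->
      (inF f (S i) -> (enum P (S p) < min_int (fint f (S i)))%nat) ->
      exists m, candidate P g m p).
  { intros HSp Hnotf Hbefore. destruct (enum_spec P _ HSp) as [HPr _].
    apply HP in HPr as [[k [Hk Hmk]]|Hgs]; [exfalso; eauto|].
    apply candidate_of_next_other with i; auto.
    assert (Hs : supp x (enum P (S p)))
      by (destruct Hgs as [j [Hj <-]]; apply partition_min_supp; auto).
    apply (partition_mem_iff x HJ f i _ Hpf Hi Hs). split; auto.
    rewrite Hmi. apply Nat.lt_le_incl, enum_lt; auto. }
  assert (Hafter : forall k, inF f k -> min_int (fint f k) = enum P (S p) ->
      in_index (enum_size P) (S p) -> (i < k)%nat).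
  { intros k Hk Hmk HSp. apply (family_min_lt_inv f Hf); auto.
    rewrite Hmi, Hmk. apply enum_lt; auto. }
  destruct (classic (inF f (S i))) as [HS|HS].
  - assert (HPa : P (min_int (fint f (S i)))) by (apply HP; left; exists (S i); auto).
    assert (Hlt : (enum P p < min_int (fint f (S i)))%nat)
      by (rewrite <- Hmi; apply family_min_lt; auto).
    destruct (enum_succ_le P p _ Hp HPa Hlt) as [HSp Hle].
    destruct (Nat.eq_dec (enum P (S p)) (min_int (fint f (S i)))) as [E|E].
    + left. exists i. split; [auto|split; [auto|left; auto]].
    + right. apply Hother; auto; [|lia]. intros k Hk Hmk.
      pose proof (Hafter k Hk Hmk HSp).
      pose proof (family_min_lt_inv f Hf k (S i) Hk HS ltac:(lia)). lia.
  - destruct (classic (in_index (enum_size P) (S p))) as [HSp|HSp].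
    + right. apply Hother; [auto| |tauto]. intros k Hk Hmk.
      pose proof (Hafter k Hk Hmk HSp). apply HS, inF_le with k; auto.
    + left. exists i. split; [auto|split; [auto|right; auto]].
Qed.

End Candidates.

Definition joint_start (f g : ifamily) (r : nat) : Prop := family_start f r \/ family_start g r.

Definition merged_int (f g : ifamily) (p : nat) : interval :=
  epsilon (inhabits (IInf 0))
    (fun K => exists h k, (h = f \/ h = g) /\ candidate (joint_start f g) h k p /\ K = fint h k).

Definition merge (f g : ifamily) : ifamily :=
  mkIFamily (enum_size (joint_start f g)) (merged_int f g).

(* When both [f] and [g] start an interval at [r], the merged family takes
   one of the two; [unused_at f g r] is the other one. *)
Definition unused_at (f g : ifamily) (r : nat) : list interval :=
  let If := fint f (count (family_start f) r) in
  let Ig := fint g (count (family_start g) r) in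
  if excluded_middle_informative (family_start f r /\ family_start g r) then
    (if excluded_middle_informative (fint (merge f g) (count (joint_start f g) r) = If)
     then Ig else If) :: nil
  else nil.

Fixpoint unused_upto (f g : ifamily) (r : nat) : list interval :=
  match r with O => nil | S r' => unused_upto f g r' ++ unused_at f g r' end.

Section Merge.
Variable x : nat -> R.
Hypothesis HJ : in_J x.
Variables f g : ifamily.
Hypothesis Hpf : x_norming_partition x f.
Hypothesis Hpg : x_norming_partition x g.

Local Notation P := (joint_start f g).
Local Notation N := (merge f g).

Lemma merge_spec p : inF N p -> exists h k, (h = f \/ h = g) /\ x_norming_partition x h /\
  candidate P h k p /\ fint N p = fint h k.
Proof.
  intros Hp. change (in_index (enum_size P) p) in Hp.
  assert (Hex : exists K, exists h k, (h = f \/ h = g) /\ candidate P h k p /\ K = fint h k).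
  { destruct (enum_spec P p Hp) as [[[i [Hi Hmi]]|[j [Hj Hmj]]] _].
    - destruct (candidate_exists_from x HJ P f g Hpf Hpg ltac:(reflexivity) i p Hi Hmi Hp)
        as [[k Hk]|[k Hk]]; [exists (fint f k), f|exists (fint g k), g]; eauto.
    - destruct (candidate_exists_from x HJ P g f Hpg Hpf ltac:(intros; unfold joint_start; tauto)
        j p Hj Hmj Hp) as [[k Hk]|[k Hk]]; [exists (fint g k), g|exists (fint f k), f]; eauto. }
  destruct (epsilon_spec (inhabits (IInf 0)) _ Hex) as [h [k [Hh [Hc E]]]].
  exists h, k. split; [auto|split; [destruct Hh as [->| ->]; auto|split; [auto|exact E]]].
Qed.

Lemma merge_family : is_family N.
Proof.
  intros p HSp. destruct (merge_spec p (in_index_le _ p (S p) HSp ltac:(lia)))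
    as [h [k [_ [Hph [[Hk [Hm [[HSk [_ HmS]]|[_ Hn]]]] E]]]]]; [|contradiction].
  destruct (merge_spec (S p) HSp) as [h' [k' [_ [_ [[_ [Hm' _]] E']]]]].
  destruct (proj1 (proj1 Hph) k HSk) as [b [Hb Hlt]].
  exists b. rewrite E, E', Hm'. split; auto. congruence.
Qed.

Lemma merge_mem_iff p n : inF N p -> supp x n ->
  in_int (fint N p) n <-> (enum P p <= n)%nat /\ (inF N (S p) -> (n < enum P (S p))%nat).
Proof.
  intros Hp Hsn. destruct (merge_spec p Hp) as [h [k [_ [Hph [[Hk [Hm Hnext]] E]]]]].
  rewrite E, (partition_mem_iff x HJ h k n Hph Hk Hsn), Hm.
  change (inF N (S p)) with (in_index (enum_size P) (S p)).
  destruct Hnext as [[HS [HSp Hm']]|[HS HSp]]; [rewrite Hm'|]; tauto.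
Qed.

Lemma merge_boundaries :
  (forall p, inF N p -> inF N (S p) ->
     supp x (min_int (fint N p)) /\ exists b, max_int (fint N p) = Some b /\ supp x b) /\
  (forall p, fsize N = Some (S p) ->
     supp x (min_int (fint N p)) /\ sup_eq_supp x (fint N p)).
Proof.
  split.
  - intros p Hp HSp.
    destruct (merge_spec p Hp) as [h [k [_ [Hph [[Hk [_ Hnext]] ->]]]]].
    destruct Hnext as [[HSk _]|[_ Hn]]; [|contradiction]. apply Hph; auto.
  - intros p Hsz. assert (Hp : inF N p) by (unfold inF; rewrite Hsz; auto).
    destruct (merge_spec p Hp) as [h [k [_ [Hph [[Hk [_ Hnext]] ->]]]]].
    destruct Hnext as [[_ [HSp _]]|[HSk _]].
    + exfalso. change (inF N (S p)) in HSp. unfold inF in HSp. rewrite Hsz in HSp. lia.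
    + apply Hph. unfold inF in *. destruct (fsize h); [f_equal; lia|tauto].
Qed.

Lemma merge_at_start r : P r ->
  (family_start f r /\ fint N (count P r) = fint f (count (family_start f) r)) \/
  (family_start g r /\ fint N (count P r) = fint g (count (family_start g) r)).
Proof.
  intros Hr. assert (Hq : inF N (count P r)) by apply (in_enum_size_count P r Hr).
  destruct (merge_spec _ Hq) as [h [k [Hh [Hph [[Hk [Hm _]] E]]]]].
  rewrite (enum_count P r Hr) in Hm. rewrite E.
  destruct Hh as [->| ->]; [left|right]; (split; [exists k; auto|]);
    rewrite <- Hm, count_family_start; auto; apply Hph.
Qed.



Lemma merge_sumsq_identity r :
  psumsq x (fint N) (count P r) + sumsq_list x (unused_upto f g r) =
  psumsq x (fint f) (count (family_start f) r) + psumsq x (fint g) (count (family_start g) r).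
Proof.
  induction r as [|r IH]; [simpl; lra|].
  cbn [unused_upto]. rewrite sumsq_app. unfold unused_at.
  destruct (excluded_middle_informative (family_start f r /\ family_start g r)) as [[Hfr Hgr]|Hn].
  - rewrite (count_S_in P), !count_S_in by (auto; left; auto). cbn [psumsq].
    destruct (excluded_middle_informative _) as [E|E]; cbn [sumsq_list fold_right].
    + rewrite E. lra.
    + destruct (merge_at_start r (or_introl Hfr)) as [[_ E']|[_ E']]; [contradiction|].
      rewrite E'. lra.
  - cbn [sumsq_list fold_right]. rewrite Rplus_0_r.
    destruct (classic (P r)) as [HPr|HPr].
    + rewrite (count_S_in P) by auto. cbn [psumsq].
      destruct (merge_at_start r HPr) as [[Hfr E]|[Hgr E]]; rewrite E.
      * rewrite (count_S_in (family_start f)), (count_S_out (family_start g)) by (auto; tauto).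
        cbn [psumsq]. lra.
      * rewrite (count_S_in (family_start g)), (count_S_out (family_start f)) by (auto; tauto).
        cbn [psumsq]. lra.
    + rewrite !count_S_out by (auto; intro; apply HPr; (left + right); auto). lra.
Qed.

Lemma unused_upto_sorted r : int_sorted (unused_upto f g r) /\
  forall K, In K (unused_upto f g r) -> exists s, (s < r)%nat /\
    family_start f s /\ family_start g s /\
    (K = fint f (count (family_start f) s) \/ K = fint g (count (family_start g) s)).
Proof.
  assert (Hf : is_family f) by apply Hpf. assert (Hg : is_family g) by apply Hpg.
  induction r as [|r [Hs Hin]]; [split; [constructor|intros K []]|].
  cbn [unused_upto]. unfold unused_at.
  destruct (excluded_middle_informative (family_start f r /\ family_start g r)) as [[Hfr Hgr]|Hn];
    [|rewrite app_nil_r; split; auto; intros K HK; destruct (Hin K HK) as [s [? ?]]; eauto].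
  set (K' := if excluded_middle_informative _ then _ else _).
  assert (HK' : K' = fint f (count (family_start f) r) \/ K' = fint g (count (family_start g) r))
    by (unfold K'; destruct (excluded_middle_informative _); auto).
  assert (HminK' : min_int K' = r).
  { destruct HK' as [-> | ->]; [apply family_start_count|apply family_start_count]; auto. }
  split.
  - apply int_sorted_app; auto using int_sorted_single.
    intros a b Ha [<-|[]] m n Hm Hn. pose proof (min_int_le _ _ Hn).
    destruct (Hin a Ha) as [s [Hsr [Hfs [Hgs [-> | ->]]]]].
    + pose proof (family_start_points_lt f Hf s r m Hfs Hfr Hsr Hm). lia.
    + pose proof (family_start_points_lt g Hg s r m Hgs Hgr Hsr Hm). lia.
  - intros K HK. apply in_app_or in HK as [HK|[<-|[]]].
    + destruct (Hin K HK) as [s [? ?]]. exists s. split; auto.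
    + exists r. auto.
Qed.

(* Far out, [f] and [g] each nearly attain [||x||^2], while the unused intervals
   form an admissible list; the identity above forces [N] to attain it too. *)
Lemma merge_norming : x_norming x N.
Proof.
  split; [apply merge_family|]. apply norm_fam_of_psumsq_approx; auto using merge_family.
  intros eps He.
  destruct (norming_psumsq_approx x HJ f (eps / 2) 0 (proj1 Hpf) ltac:(lra) ltac:(intros m Hm; lia))
    as [nf [_ [Hnf Hvf]]].
  destruct (norming_psumsq_approx x HJ g (eps / 2) 0 (proj1 Hpg) ltac:(lra) ltac:(intros m Hm; lia))
    as [ng [_ [Hng Hvg]]].
  destruct (count_family_start_ge f (proj1 (proj1 Hpf)) nf Hnf) as [rf Hrf].
  destruct (count_family_start_ge g (proj1 (proj1 Hpg)) ng Hng) as [rg Hrg].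
  set (r := Nat.max rf rg).
  exists (count P r). split.
  - intros q Hq. apply in_enum_size. exists r. auto.
  - pose proof (merge_sumsq_identity r).
    pose proof (sumsq_le_normJ x HJ _ (proj1 (unused_upto_sorted r))).
    pose proof (psumsq_mono x (fint f) _ _ (Hrf r ltac:(lia))).
    pose proof (psumsq_mono x (fint g) _ _ (Hrg r ltac:(lia))).
    lra.
Qed.

Lemma merge_covers h i : (h = f \/ h = g) -> inF h i ->
  exists K, index_subinterval N K /\ covers_supp x (fint h i) N K.
Proof.
  intros Hh Hi. assert (Hph : x_norming_partition x h) by (destruct Hh as [->| ->]; auto).
  assert (Hfh : is_family h) by apply Hph.
  assert (Hstart : forall k, inF h k -> P (min_int (fint h k)))
    by (intros k Hk; destruct Hh as [->| ->]; [left|right]; exists k; auto).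
  destruct (enum_block P (min_int (fint h i)) (inF h (S i)) (min_int (fint h (S i))))
    as [K HK]; auto.
  { intros HS. split; auto. apply family_min_lt; auto. }
  pose proof (enum_count P _ (Hstart i Hi)) as He0.
  exists K. split; [intros p Hp; apply HK in Hp; apply Hp|]. intros n. split.
  - intros [Hn Hsn]. apply (partition_mem_iff x HJ h i n Hph Hi Hsn) in Hn as [H1 H2].
    destruct (enum_locate P n (ex_intro _ _ (conj (Hstart i Hi) H1))) as [q [Hq [Hqn Hqn']]].
    exists q. split; [|split; [apply merge_mem_iff; auto|auto]].
    apply HK. split; [auto|split].
    + apply Nat.nlt_ge. intros Hlt.
      assert (HSq : in_index (enum_size P) (S q))
        by (apply in_index_le with (count P (min_int (fint h i))); auto using in_enum_size_count).
      pose proof (enum_le P (S q) _ (in_enum_size_count P _ (Hstart i Hi)) Hlt).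
      specialize (Hqn' HSq). lia.
    + intros HS. specialize (H2 HS). lia.
  - intros [p [Hpk [Hnp Hsn]]]. split; auto. apply HK in Hpk as [Hp [Hp0p Hlt]].
    apply merge_mem_iff in Hnp as [Hn1 Hn2]; auto.
    apply (partition_mem_iff x HJ h i n Hph Hi Hsn). split.
    + pose proof (enum_le P _ p Hp Hp0p). lia.
    + intros HS. specialize (Hlt HS).
      pose proof (in_enum_size_count P _ (Hstart (S i) HS)) as Hq1.
      rewrite <- (enum_count P _ (Hstart (S i) HS)) in Hlt |- *.
      pose proof (enum_lt_inv P p _ Hp Hq1 Hlt).
      assert (HSp : in_index (enum_size P) (S p))
        by (apply in_index_le with (count P (min_int (fint h (S i)))); auto).
      specialize (Hn2 HSp). pose proof (enum_le P (S p) _ Hq1 ltac:(lia)). lia.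
Qed.

End Merge.

Theorem corollary3p10 (x : nat -> R) (I L : ifamily) :
  in_J x ->
  x_norming_partition x I ->
  x_norming_partition x L ->
  exists N : ifamily,
    x_norming_partition x N /\
    (forall p, inF N p ->
       (exists i, inF I i /\ same_interval (fint N p) (fint I i)) \/
       (exists j, inF L j /\ same_interval (fint N p) (fint L j))) /\
    (forall i, inF I i ->
       exists K, index_subinterval N K /\ covers_supp x (fint I i) N K) /\
    (forall j, inF L j ->
       exists K, index_subinterval N K /\ covers_supp x (fint L j) N K).
Proof.
  intros HJ HpI HpL. exists (merge I L). split; [|split; [|split]].
  - split; [apply merge_norming|apply merge_boundaries]; auto.
  - intros p Hp.
    destruct (merge_spec x HJ I L HpI HpL p Hp) as [h [k [Hh [_ [[Hk _] E]]]]].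
    destruct Hh as [-> | ->]; [left|right]; exists k; split; auto; rewrite E; intros n; tauto.
  - intros i Hi. apply (merge_covers x HJ I L HpI HpL I i); auto.
  - intros j Hj. apply (merge_covers x HJ I L HpI HpL L j); auto.
Qed.
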